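(* Let $\dot x$ be a hereditarily symmetric name for a subset of $\omega$, supported by a countable $\rho$-closed set $A\subseteq\omega_1$. Then there exists a rank-$1$ packet scheme $\mathfrak S$ over $A$ (i.e. with first coordinate $A$) such that $\Vdash\dot x=\dot x_{\mathfrak S}$.
   Context: $\rho:\omega_1\setminus\{0\}\to\omega_1$ is the generic regressive map added by finite partial regressive functions; $\operatorname{Succ}_\rho(\xi)=\{\eta:\rho(\eta)=\xi\}$; a set is $\rho$-closed if closed under $\rho$, $\operatorname{cl}_\rho(A)$ the least $\rho$-closed superset. $\mathbb P_1=\operatorname{Fn}(\omega_1\times\omega\times\omega,2,{<}\omega)$. For $\xi<\omega_1,i<\omega$, $s\subseteq\omega$ finite or cofinite, $\tau^{\mathrm{1cas}}_{\xi,i,s}$ flips the value of a condition at each coordinate $(\zeta,i,n)$ with $n\in s$ and $\zeta\in\{\xi\}\cup\operatorname{Succ}_\rho(\xi)$; $\mathscr G^{\mathrm{1cas}}_\rho$ is the group they generate; $\operatorname{Fix}^{\mathrm{1cas}}_\rho(A)$ is the subgroup acting trivially on coordinates $(\zeta,j,n)$ with $\zeta\in\operatorname{cl}_\rho(A)$; $\mathscr F^{\mathrm{1cas}}_\rho$ is the filter of subgroups generated by these for countable $A$; hereditarily symmetric names are with respect to $(\mathbb P_1,\mathscr G^{\mathrm{1cas}}_\rho,\mathscr F^{\mathrm{1cas}}_\rho)$; a name is supported by $A$ if fixed by $\operatorname{Fix}^{\mathrm{1cas}}_\rho(A)$. A name for a subset of $\omega$ is one all of whose members are pairs $(\check m,r)$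 with $m\in\omega$, $r\in\mathbb P_1$. An exact finite cascade packet is a condition $r\in\mathbb P_1$ whose node-support $\{\xi:\exists i,n\ r(\xi,i,n)\text{ defined}\}$ is finite and $\rho$-closed. A rank-$1$ packet scheme is $\mathfrak S=(A,\langle\mathcal C_m:m<\omega\rangle)$ with $A$ countable $\rho$-closed and each $\mathcal C_m$ a countable family of exact finite cascade packets with node-support $\subseteq A$; $\dot x_{\mathfrak S}=\{(\check m,r):m<\omega, r\in\mathcal C_m\}$. *)

From mathcomp Require Import all_boot.
Set Implicit Arguments. Unset Strict Implicit. Unset Printing Implicit Defensive.

Definition countable_set (O : Type) (B : O -> Prop) : Prop :=
  exists f : nat -> O, forall x, B x -> exists n, f n = x.

(* (O, lt, z) is (an isomorphic copy of) omega_1 with least element z = 0: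
   a well-founded strict total order, uncountable, all of whose proper
   initial segments are countable. *)
Definition is_omega1 (O : Type) (lt : O -> O -> Prop) (z : O) : Prop :=
  (forall x, ~ lt x x) /\
  (forall x y w, lt x y -> lt y w -> lt x w) /\
  (forall x y, lt x y \/ x = y \/ lt y x) /\
  well_founded lt /\
  (forall x, ~ lt x z) /\
  (forall x, countable_set (fun y => lt y x)) /\
  ~ countable_set (fun _ : O => True).

(* rho : omega_1 \ {0} -> omega_1 regressive (its value at 0 is irrelevant). *)
Definition regressive (O : Type) (lt : O -> O -> Prop) (z : O) (rho : O -> O) :=
  forall eta, eta <> z -> lt (rho eta) eta.

Section Cascade.
Variables (O : eqType) (z : O) (rho : O -> O).

Definition Succ (xi eta : O) : bool := (eta != z) && (rho eta == xi).

Definition rho_closed (B : O -> Prop) : Prop :=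
  forall eta, B eta -> eta <> z -> B (rho eta).

Definition cl (A : O -> Prop) : O -> Prop :=
  fun x => forall B, rho_closed B -> (forall y, A y -> B y) -> B x.

(* ---------- P_1 = Fn(omega_1 x omega x omega, 2, <omega) ---------- *)
Definition cond := O -> nat -> nat -> option bool.

Definition is_cond (p : cond) : Prop :=
  exists l : seq (O * nat * nat),
    forall x i n, p x i n <> None -> (x, i, n) \in l.

Definition ext (q p : cond) : Prop :=
  forall x i n b, p x i n = Some b -> q x i n = Some b.

Definition fin_or_cofin (s : nat -> bool) : Prop :=
  (exists N, forall n, N <= n -> s n = false) \/
  (exists N, forall n, N <= n -> s n = true).

Definition tau (xi : O) (i : nat) (s : nat -> bool) (p : cond) : cond :=
  fun x j n =>
    if [&& j == i, s n & (x == xi) || Succ xi x]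
    then omap negb (p x j n) else p x j n.

Definition gen := (O * nat * (nat -> bool))%type.
Fixpoint valid_word (w : seq gen) : Prop :=
  if w is g :: w' then fin_or_cofin g.2 /\ valid_word w' else True.
Definition act_word (w : seq gen) : cond -> cond :=
  foldr (fun g f => fun p => tau g.1.1 g.1.2 g.2 (f p)) id w.

Definition inG (pi : cond -> cond) : Prop :=
  exists w, valid_word w /\ pi = act_word w.

Definition Fix (A : O -> Prop) (pi : cond -> cond) : Prop :=
  inG pi /\ forall p x j n, cl A x -> pi p x j n = p x j n.

(* a name: set of pairs (check m, r) *)
Definition name := nat -> cond -> Prop.

Definition is_name (X : name) : Prop := forall m r, X m r -> is_cond r.

Definition act_name (pi : cond -> cond) (X : name) : name :=
  fun m r' => exists r, X m r /\ pi r = r'.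

Definition fixes (pi : cond -> cond) (X : name) : Prop :=
  forall m r, act_name pi X m r <-> X m r.

Definition supported_by (A : O -> Prop) (X : name) : Prop :=
  forall pi, Fix A pi -> fixes pi X.

(* sym(X) belongs to the filter generated by Fix(A'), A' countable
   (this family is directed, so membership = containing some Fix(A')).
   The members check m of X are hereditarily symmetric automatically. *)
Definition hereditarily_symmetric (X : name) : Prop :=
  is_name X /\
  exists A', countable_set A' /\ forall pi, Fix A' pi -> fixes pi X.

Definition forces_mem (p : cond) (m : nat) (Y : name) : Prop :=
  forall q, is_cond q -> ext q p ->
    exists q', is_cond q' /\ ext q' q /\ exists r, Y m r /\ ext q' r.

(* 1 ||- X = Y  (Kunen's definition unfolded for names with check-name
   first coordinates) *)
Definition forces_eq (X Y : name) : Prop :=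
  (forall m r, X m r -> forall q, is_cond q -> ext q r -> forces_mem q m Y) /\
  (forall m r, Y m r -> forall q, is_cond q -> ext q r -> forces_mem q m X).

Definition node_support (r : cond) : O -> Prop :=
  fun x => exists i n, r x i n <> None.

Definition exact_packet (r : cond) : Prop :=
  is_cond r /\ rho_closed (node_support r).

Definition countable_family (C : cond -> Prop) : Prop :=
  exists f : nat -> cond, forall r, C r -> exists n, f n = r.

Definition packet_scheme (A : O -> Prop) (C : nat -> cond -> Prop) : Prop :=
  [/\ countable_set A, rho_closed A &
      forall m, countable_family (C m) /\
        forall r, C m r -> exact_packet r /\ (forall x, node_support r x -> A x)].

Definition x_S (C : nat -> cond -> Prop) : name := fun m r => C m r.

End Cascade.

(* Let C_m consist of the exact packets over A that force m in X; then
   x_S is forced into X outright.  Conversely, let (m, r) be in X and q <= r.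
   The nodes of q lying in A have a finite rho-closure S; extending q by a
   mark at every node of S and restricting to S gives an exact packet r' over
   A lying above the extension.  Any s <= r' agrees with q on A, and the
   coordinates off A where q and s disagree can all be flipped by a word of
   generators based outside A, i.e. by some pi fixing A: flip them in order of
   decreasing node, as the generator at xi moves besides xi only nodes eta
   with rho eta = xi, which lie above xi.  Since pi fixes X, s is compatible
   with pi r in X, so r' forces m in X. *)

From Stdlib Require List.
From mathcomp Require Import all_boot boolp.
Set Implicit Arguments. Unset Strict Implicit. Unset Printing Implicit Defensive.

Section Conditions.
Variable O : eqType.
Implicit Types p q r s : cond O.

Lemma ext_trans p q r : ext p q -> ext q r -> ext p r.
Proof. by move=> pq qr x i n b /qr /pq. Qed.

Definition compatible p q : Prop :=
  forall x i n b b', p x i n = Some b -> q x i n = Some b' -> b = b'.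

Definition join p q : cond O :=
  fun x i n => if p x i n is Some b then Some b else q x i n.

Lemma is_cond_join p q : is_cond p -> is_cond q -> is_cond (join p q).
Proof.
move=> [lp lpP] [lq lqP]; exists (lp ++ lq) => x i n; rewrite /join mem_cat.
by case E: (p x i n) => [b|] pq; [rewrite lpP ?E | rewrite lqP ?orbT].
Qed.

Lemma ext_joinl p q : ext (join p q) p.
Proof. by move=> x i n b pb; rewrite /join pb. Qed.

Lemma ext_joinr p q : compatible p q -> ext (join p q) q.
Proof.
move=> pq x i n b qb; rewrite /join.
by case E: (p x i n) => [b'|] //; rewrite (pq _ _ _ _ _ E qb).
Qed.

Definition ext_on (B : O -> Prop) s q : Prop :=
  forall x i n b, B x -> q x i n = Some b -> s x i n = Some b.

Definition restrict (S : seq O) p : cond O :=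
  fun x i n => if x \in S then p x i n else None.

Lemma node_support_restrict S p x : node_support (restrict S p) x -> x \in S.
Proof. by case=> i [n]; rewrite /restrict; case: ifP. Qed.

Lemma is_cond_restrict S p : is_cond p -> is_cond (restrict S p).
Proof.
by move=> [l lP]; exists l => x i n; rewrite /restrict; case: ifP => // _ /lP.
Qed.

Definition mark (S : seq O) : cond O :=
  fun x i n => if [&& x \in S, i == 0 & n == 0] then Some false else None.

Lemma is_cond_mark S : is_cond (mark S).
Proof.
exists [seq (x, 0, 0) | x <- S] => x i n; rewrite /mark.
by case: ifP => // /and3P[xS /eqP-> /eqP->] _; rewrite map_f.
Qed.

Lemma node_support_restrict_mark S p x :
  node_support (restrict S (join p (mark S))) x <-> x \in S.
Proof.
split; first exact: node_support_restrict.
move=> xS; exists 0, 0; rewrite /restrict /join /mark xS.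
by case: (p x 0 0).
Qed.

End Conditions.

Section GeneratorWords.
Variables (O : eqType) (z : O) (rho : O -> O).

Definition gen_hits (g : gen O) (x : O) (j n : nat) : bool :=
  [&& j == g.1.2, g.2 n & (x == g.1.1) || Succ z rho g.1.1 x].

Definition flip_parity (w : seq (gen O)) (x : O) (j n : nat) : bool :=
  odd (count (fun g => gen_hits g x j n) w).

Lemma flip_parity_cons g w x j n :
  flip_parity (g :: w) x j n = gen_hits g x j n (+) flip_parity w x j n.
Proof. by rewrite /flip_parity /= oddD oddb. Qed.

Lemma act_wordE w (p : cond O) x j n :
  act_word z rho w p x j n =
  if flip_parity w x j n then omap negb (p x j n) else p x j n.
Proof.
elim: w => [|g w IH] //=; rewrite /tau IH flip_parity_cons -/(gen_hits g x j n).
by case: gen_hits; case: flip_parity; case: (p x j n) => //= b; rewrite negbK.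
Qed.

Lemma act_word_None w (p : cond O) x j n :
  (act_word z rho w p x j n == None) = (p x j n == None).
Proof. by rewrite act_wordE; case: flip_parity; case: (p x j n). Qed.

Lemma is_cond_act_word w p : is_cond p -> is_cond (act_word z rho w p).
Proof.
by move=> [l lP]; exists l => x i n /eqP; rewrite act_word_None => /eqP /lP.
Qed.

Lemma ext_act_word w p q :
  ext p q -> ext (act_word z rho w p) (act_word z rho w q).
Proof.
move=> pq x i n b; rewrite !act_wordE.
by case E: (q x i n) => [b'|]; [rewrite (pq _ _ _ _ E) | case: flip_parity].
Qed.

Variable A : O -> Prop.
Hypothesis A_closed : rho_closed z rho A.

Lemma gen_hits_closed g x j n : ~ A g.1.1 -> A x -> gen_hits g x j n = false.
Proof.
move=> Ag Ax; apply/and3P => -[_ _ /orP[/eqP ex | /andP[/eqP xz /eqP rx]]].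
  by apply: Ag; rewrite -ex.
by apply: Ag; rewrite -rx; exact: A_closed.
Qed.

Lemma flip_parity_closed w x j n :
  (forall g, List.In g w -> ~ A g.1.1) -> A x -> flip_parity w x j n = false.
Proof.
move=> wA Ax; elim: w wA => [|g w IH] wA //.
rewrite flip_parity_cons gen_hits_closed ?IH //=; last by apply: wA; left.
by move=> g' wg'; apply: wA; right.
Qed.

Lemma cl_closed x : cl z rho A x -> A x.
Proof. by apply; [exact: A_closed | move]. Qed.

Lemma Fix_act_word w : valid_word w -> (forall g, List.In g w -> ~ A g.1.1) ->
  Fix z rho A (act_word z rho w).
Proof.
move=> vw wA; split; first by exists w.
by move=> p x j n /cl_closed Ax; rewrite act_wordE flip_parity_closed.
Qed.

End GeneratorWords.

Section RegressiveOrder.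
Variables (O : eqType) (lt : O -> O -> Prop) (z : O) (rho : O -> O).
Hypotheses (lt_irr : forall x, ~ lt x x)
  (lt_trans : forall x y w, lt x y -> lt y w -> lt x w)
  (rho_regressive : regressive lt z rho).

Lemma exists_maximal (T : eqType) (f : T -> O) (L : seq T) c0 : c0 \in L ->
  exists2 c, c \in L & forall c', c' \in L -> ~ lt (f c) (f c').
Proof.
elim: L c0 => [|a L IH] c0 // _; case: L IH => [|b L] IH.
  by exists a => [|c']; rewrite ?inE // => /eqP ->.
have [c cL cmax] := IH b (mem_head b L).
have [ca | nca] := pselect (lt (f c) (f a)).
  exists a; first exact: mem_head.
  move=> c'; rewrite in_cons => /predU1P[-> | c'L]; first exact: lt_irr.
  by move=> ac'; apply: (cmax c' c'L); exact: lt_trans ca ac'.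
exists c => [|c']; first by rewrite in_cons cL orbT.
by rewrite in_cons => /predU1P[-> | /cmax].
Qed.

Definition point_gen (c : O * nat * nat) : gen O :=
  (c.1.1, c.1.2, fun n => n == c.2).

Lemma point_gen_hits c c' : ~ lt c.1.1 c'.1.1 ->
  gen_hits z rho (point_gen c) c'.1.1 c'.1.2 c'.2 = (c' == c).
Proof.
case: c c' => [[x i] k] [[x' i'] k'] /= nlt; rewrite /gen_hits /= !xpair_eqE.
case: (x' =P x) => [-> | nx] /=; first by rewrite andbT.
apply/negbTE/and3P => -[_ _ /andP[/eqP x'z /eqP rx']].
by apply: nlt; rewrite -rx'; exact: rho_regressive.
Qed.

Lemma flip_word_exists (P : O -> Prop) (L : seq (O * nat * nat))
    (d : O * nat * nat -> bool) :
  (forall c, c \in L -> P c.1.1) ->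
  exists w, [/\ valid_word w, (forall g, List.In g w -> P g.1.1) &
    forall c, c \in L -> flip_parity z rho w c.1.1 c.1.2 c.2 = d c].
Proof.
have [n] := ubnP (size L); elim: n L => // n IH [|c0 L0] sizeL LP.
  by exists [::].
set L := c0 :: L0 in sizeL LP *.
have [c cL cmax] := exists_maximal (fun c => c.1.1) (mem_head c0 L0 : c0 \in L).
have size_rest : size (rem c L) < n by rewrite size_rem // -ltnS.
have rest_P c' : c' \in rem c L -> P c'.1.1 by move/mem_rem; exact: LP.
have [w [vw wP wd]] := IH _ size_rest rest_P.
have wd' c' : c' \in L -> c' != c ->
    flip_parity z rho w c'.1.1 c'.1.2 c'.2 = d c'.
  by move=> c'L c'c; apply/wd/rem_mem.
have [wc | wc] := eqVneq (flip_parity z rho w c.1.1 c.1.2 c.2) (d c).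
  exists w; split=> // c' c'L; have [-> // | c'c] := eqVneq c' c; exact: wd'.
exists (point_gen c :: w); split.
- by split=> //; left; exists c.2.+1 => k ck; apply: gtn_eqF.
- by move=> g [<- | ]; [exact: LP | exact: wP].
- move=> c' c'L; rewrite flip_parity_cons point_gen_hits; last exact: cmax.
  have [-> | c'c] := eqVneq c' c; last by rewrite wd'.
  by move: wc; case: flip_parity; case: (d c).
Qed.

Hypothesis lt_wf : well_founded lt.

Definition seq_rho_closed (S : seq O) : Prop :=
  forall y, y \in S -> y != z -> rho y \in S.

Lemma rho_closure_point (B : O -> Prop) x : rho_closed z rho B -> B x ->
  exists S, [/\ x \in S, (forall y, y \in S -> B y) & seq_rho_closed S].
Proof.
move=> Bc; elim/(well_founded_ind lt_wf): x => x IH Bx.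
have [xz | /eqP xz] := eqVneq x z.
  exists [:: x]; split=> [|y|y]; rewrite ?mem_seq1 // => /eqP -> //.
  by rewrite xz eqxx.
have [S [rS SB Sc]] := IH _ (rho_regressive xz) (Bc _ Bx xz).
exists (x :: S); split=> [|y|y]; rewrite ?inE ?eqxx //.
  by case/predU1P=> [-> | /SB].
by case/predU1P=> [-> _ | yS yz]; rewrite ?rS ?(Sc y yS yz) ?orbT.
Qed.

Lemma rho_closure_seq (B : O -> Prop) (S0 : seq O) : rho_closed z rho B ->
  (forall x, x \in S0 -> B x) ->
  exists S, [/\ {subset S0 <= S}, (forall y, y \in S -> B y) & seq_rho_closed S].
Proof.
move=> Bc; elim: S0 => [|a S0 IH] S0B; first by exists [::].
have [S [S0S SB Sc]] : exists S,
    [/\ {subset S0 <= S}, (forall y, y \in S -> B y) & seq_rho_closed S].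
  by apply: IH => x xS0; apply: S0B; rewrite inE xS0 orbT.
have [T [aT TB Tc]] := rho_closure_point Bc (S0B a (mem_head a S0)).
exists (T ++ S); split=> [x|y|y]; rewrite ?mem_cat.
- by case/predU1P=> [-> | /S0S ->]; rewrite ?aT ?orbT.
- by case/orP; [exact: TB | exact: SB].
- by case/orP=> [yT yz | yS yz]; rewrite ?(Tc y yT yz) ?(Sc y yS yz) ?orbT.
Qed.

End RegressiveOrder.

Section CountableConditions.
Variable O : eqType.

Definition cond_of_entries (e : nat -> O) (s : seq (nat * nat * nat * bool)) :
  cond O :=
  fun x i n => foldr (fun t rest =>
    if [&& e t.1.1.1 == x, t.1.1.2 == i & t.1.2 == n] then Some t.2 else rest)
  None s.

Lemma cond_of_entries_onto (e : nat -> O) (r : cond O) : is_cond r ->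
  (forall x, node_support r x -> exists k, e k = x) ->
  exists s, cond_of_entries e s = r.
Proof.
move=> [l lP] re.
suff [s sP] : exists s, forall x i n,
    cond_of_entries e s x i n = if (x, i, n) \in l then r x i n else None.
  exists s; apply/funext => x; apply/funext => i; apply/funext => n.
  rewrite sP.
  by case: ifP => // xl; case E: (r x i n) => //; rewrite lP ?E in xl.
elim: l {lP} => [|[[x' i'] n'] l [s sP]]; first by exists [::].
case E: (r x' i' n') => [b|].
  have [k ek] : exists k, e k = x' by apply: re; exists i', n'; rewrite E.
  exists ((k, i', n', b) :: s) => x i n; rewrite in_cons /= ek sP.
  have -> : [&& x' == x, i' == i & n' == n] = ((x, i, n) == (x', i', n')).
    by rewrite !xpair_eqE andbA (eq_sym x') (eq_sym i') (eq_sym n').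
  by case: eqP => [[-> -> ->] | _].
exists s => x i n; rewrite in_cons sP.
by case: eqP => [[-> -> ->] | _] //; rewrite E; case: ifP.
Qed.

Lemma countable_conds_on (A : O -> Prop) : countable_set A ->
  exists f : nat -> cond O, forall r, is_cond r ->
    (forall x, node_support r x -> A x) -> exists k, f k = r.
Proof.
move=> [e eA]; exists (fun k => if unpickle k is Some s then cond_of_entries e s
                               else fun _ _ _ => None).
move=> r rc rA.
have [s <-] := cond_of_entries_onto rc (fun x xr => eA x (rA x xr)).
by exists (pickle s); rewrite pickleK.
Qed.

End CountableConditions.

Section RhoClosedSupport.
Variables (O : eqType) (lt : O -> O -> Prop) (z : O) (rho : O -> O).
Hypotheses (lt_irr : forall x, ~ lt x x)
  (lt_trans : forall x y w, lt x y -> lt y w -> lt x w)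
  (rho_regressive : regressive lt z rho).
Variable A : O -> Prop.
Hypothesis A_closed : rho_closed z rho A.

Lemma Fix_word_compatible (q s : cond O) : is_cond q -> ext_on A s q ->
  exists w, Fix z rho A (act_word z rho w) /\ compatible s (act_word z rho w q).
Proof.
move=> [l lP] qs.
pose L := [seq c <- l | ~~ `[< A c.1.1 >]].
pose d (c : O * nat * nat) :=
  if (q c.1.1 c.1.2 c.2, s c.1.1 c.1.2 c.2) is (Some b, Some b') then b != b'
  else false.
have LA c : c \in L -> ~ A c.1.1 by rewrite mem_filter => /andP[/asboolPn].
have [w [vw wA wd]] :=
  @flip_word_exists _ _ _ _ lt_irr lt_trans rho_regressive
    (fun x => ~ A x) L d LA.
exists w; split; first exact: (Fix_act_word A_closed vw wA).
move=> x i n b b' sb; rewrite act_wordE.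
have [Ax | nAx] := pselect (A x).
  rewrite (flip_parity_closed A_closed) // => /(qs _ _ _ _ Ax).
  by rewrite sb => -[].
case E: (q x i n) => [b0|]; last by case: flip_parity.
have xL : (x, i, n) \in L.
  by rewrite mem_filter /= lP ?E // andbT; exact/asboolPn.
rewrite (wd _ xL) /d /= E sb {E sb}.
by case: b0; case: b => -[].
Qed.

Lemma supported_name_meets (X : name O) m (r q s : cond O) :
  supported_by z rho A X -> X m r -> is_cond q -> ext q r ->
  is_cond s -> ext_on A s q ->
  exists t, is_cond t /\ ext t s /\ exists r0, X m r0 /\ ext t r0.
Proof.
move=> XA Xr qc qr sc qs.
have [w [wF swq]] := Fix_word_compatible qc qs.
have Xwr : X m (act_word z rho w r) by apply/(XA _ wF); exists r.
exists (join s (act_word z rho w q)).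
split; first exact/is_cond_join/is_cond_act_word.
split; first exact: ext_joinl.
exists (act_word z rho w r); split=> //.
apply: (ext_trans (ext_joinr swq)); exact: ext_act_word.
Qed.

Hypothesis lt_wf : well_founded lt.

Lemma packet_hull (q : cond O) : is_cond q ->
  exists q' r, [/\ is_cond q', ext q' q, exact_packet z rho r,
    (forall x, node_support r x -> A x) &
    forall x i n, A x -> r x i n = q' x i n].
Proof.
move=> qc; have [l lP] := qc.
set S0 := [seq c.1.1 | c <- l & `[< A c.1.1 >]].
have S0A x : x \in S0 -> A x.
  by case/mapP=> c /[!mem_filter] /andP[/asboolP Ac _] ->.
have [S [S0S SA Sc]] := rho_closure_seq rho_regressive lt_wf A_closed S0A.
exists (join q (mark S)), (restrict S (join q (mark S))); split.
- exact/is_cond_join/is_cond_mark.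
- exact: ext_joinl.
- split; first exact/is_cond_restrict/is_cond_join/is_cond_mark.
  move=> x /node_support_restrict_mark xS xz.
  by apply/node_support_restrict_mark/Sc => //; exact/eqP.
- by move=> x /node_support_restrict /SA.
move=> x i n Ax; rewrite /restrict /join /mark; case xS: (x \in S) => //.
case E: (q x i n) => [b|] //; suff : x \in S by rewrite xS.
apply/S0S/mapP; exists (x, i, n) => //.
by rewrite mem_filter lP ?E // andbT; exact/asboolP.
Qed.

End RhoClosedSupport.

Section PacketScheme.
Variables (O : eqType) (z : O) (rho : O -> O) (A : O -> Prop) (X : name O).

Definition packets_forcing (m : nat) (r : cond O) : Prop :=
  [/\ exact_packet z rho r, (forall x, node_support r x -> A x)
    & forces_mem r m X].

Lemma packet_scheme_packets_forcing :
  countable_set A -> rho_closed z rho A -> packet_scheme z rho A packets_forcing.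
Proof.
move=> Acount Ac; split=> // m; split=> [|r [] //].
have [f fP] := countable_conds_on Acount.
by exists f => r [[rc _] rA _]; exact: fP.
Qed.

Lemma forces_mem_ext p q m : ext q p -> forces_mem p m X -> forces_mem q m X.
Proof. by move=> qp pX q' q'c q'q; apply: pX => //; exact: ext_trans q'q qp. Qed.

Variable lt : O -> O -> Prop.
Hypotheses (lt_irr : forall x, ~ lt x x)
  (lt_trans : forall x y w, lt x y -> lt y w -> lt x w)
  (rho_regressive : regressive lt z rho) (lt_wf : well_founded lt)
  (A_closed : rho_closed z rho A).

Lemma forces_eq_packets_forcing :
  supported_by z rho A X -> forces_eq X (x_S packets_forcing).
Proof.
move=> XA; split=> m r; last by move=> [_ _ rX] q _ qr; exact: forces_mem_ext rX.
move=> Xr q qc qr q0 q0c q0q.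
have [q' [r' [q'c q'q0 r'p r'A r'q']]] :=
  packet_hull rho_regressive A_closed lt_wf q0c.
have q'r' : ext q' r'.
  by move=> x i n b rb; rewrite -r'q' //; apply: r'A; exists i, n; rewrite rb.
exists q'; split=> //; split=> //; exists r'; split=> //; split=> // s sc sr'.
have q'r : ext q' r by exact: ext_trans q'q0 (ext_trans q0q qr).
have sq' : ext_on A s q' by move=> x i n b Ax; rewrite -r'q' // => /sr'.
exact: (supported_name_meets lt_irr lt_trans rho_regressive A_closed
          XA Xr q'c q'r sc sq').
Qed.

End PacketScheme.

Theorem theorem4p5 (O : eqType) (lt : O -> O -> Prop) (z : O) (rho : O -> O)
  (Hom1 : is_omega1 lt z) (Hreg : regressive lt z rho)
  (X : name O) (A : O -> Prop)
  (HA : countable_set A) (HAc : rho_closed z rho A)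
  (HX : hereditarily_symmetric z rho X)
  (HXA : supported_by z rho A X) :
  exists C : nat -> cond O -> Prop,
    packet_scheme z rho A C /\ forces_eq X (x_S C).
Proof.
have [lt_irr [lt_trans [_ [lt_wf _]]]] := Hom1.
exists (packets_forcing z rho A X); split.
  exact: packet_scheme_packets_forcing.
exact: forces_eq_packets_forcing lt_irr lt_trans Hreg lt_wf HAc HXA.
Qed.
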